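(* Let $G=(V,E)$ with colouring $f$ satisfy $|B|>|R|$. Let $E^*$ be the set of pairs $\{u,v\}\notin E$ ($u\neq v$) with at least one of $u,v$ blue. Define $b^*(v)=\max(r(v)-b(v),0)$ for $v\in R$ and $b^*(v)=b(v)-r(v)$ for $v\in B$. Consider the integer program (IP-1a) in variables $y_e$, $e\in E^*$: maximize $-\sum_{e\in E^*}y_e$ subject to $\sum_{u\in N_{E^*}(v)\cap B}y_{uv}=b^*(v)$ for all $v\in R$; $-\sum_{u\in N_{E^*}(v)\cap B}y_{uv}+\sum_{u\in N_{E^*}(v)\cap R}y_{uv}\le b^*(v)$ for all $v\in B$; $y_e\in\{0,1\}$ for all $e\in E^*$. Then a set $Y\subseteq E^*$ has indicator vector optimal for (IP-1a) if and only if $E\cup Y$ is an optimal solution to the MIAE problem on $(G,f)$; moreover every optimal MIAE solution $E'$ satisfies $E'\setminus E\subseteq E^*$, and the optimal value of (IP-1a) equals $-\min|E'\setminus E|$ over MIAE-feasible $E'$.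
   Context: Graphs are finite, simple and undirected; $B,R$ are the blue and red nodes under $f:V\to\{B,R\}$; $b(v),r(v)$ are the numbers of blue and red neighbours of $v$ in $G$; $N_{E^*}(v)=\{u:\{u,v\}\in E^*\}$. A node is under illusion in $(V,E')$ if it has strictly more red than blue neighbours there. An optimal solution to MIAE is an edge set $E'\supseteq E$ on $V$ such that no node is under illusion in $(V,E')$ and $|E'\setminus E|$ is minimum among all such sets. *)

From mathcomp Require Import all_boot all_order all_algebra.
Set Implicit Arguments. Unset Strict Implicit. Unset Printing Implicit Defensive.
Import Order.TTheory GRing.Theory Num.Theory.
Local Open Scope ring_scope.

Inductive colour := Blue | Red.

Section Defs.
Variable T : finType.

Definition is_edge_set (E : {set {set T}}) : Prop :=
  forall e, e \in E -> #|e| = 2%N.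

Definition blue (f : T -> colour) : {set T} :=
  [set v | if f v is Blue then true else false].
Definition red (f : T -> colour) : {set T} :=
  [set v | if f v is Red then true else false].

Definition nbhd (E : {set {set T}}) (v : T) : {set T} :=
  [set u | [set u; v] \in E].

Definition bdeg f E v : nat := #|nbhd E v :&: blue f|.
Definition rdeg f E v : nat := #|nbhd E v :&: red f|.

Definition under_illusion f E v : bool := (bdeg f E v < rdeg f E v)%N.

Definition MIAE_feasible f (E E' : {set {set T}}) : Prop :=
  is_edge_set E' /\ E \subset E' /\ forall v, ~~ under_illusion f E' v.

Definition MIAE_optimal f (E E' : {set {set T}}) : Prop :=
  MIAE_feasible f E E' /\
  forall E'', MIAE_feasible f E E'' -> (#|E' :\: E| <= #|E'' :\: E|)%N.

Definition Estar f (E : {set {set T}}) : {set {set T}} :=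
  [set e : {set T} | [&& #|e| == 2%N, e \notin E & e :&: blue f != set0]].

Definition bstar f E v : int :=
  if f v is Red then Num.max ((rdeg f E v)%:Z - (bdeg f E v)%:Z) 0
  else (bdeg f E v)%:Z - (rdeg f E v)%:Z.

(* IP-1a over a vector y indexed by E^* (values of y outside E^* are ignored) *)
Definition IP_obj f E (y : {set T} -> int) : int :=
  - \sum_(e in Estar f E) y e.

Definition IP_feasible f E (y : {set T} -> int) : Prop :=
  (forall e, e \in Estar f E -> y e = 0 \/ y e = 1) /\
  (forall v, v \in red f ->
     \sum_(u in nbhd (Estar f E) v :&: blue f) y [set u; v] = bstar f E v) /\
  (forall v, v \in blue f ->
     - \sum_(u in nbhd (Estar f E) v :&: blue f) y [set u; v]
     + \sum_(u in nbhd (Estar f E) v :&: red f) y [set u; v] <= bstar f E v).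

Definition IP_optimal f E (y : {set T} -> int) : Prop :=
  IP_feasible f E y /\
  forall y', IP_feasible f E y' -> IP_obj f E y' <= IP_obj f E y.

Definition indicator (Y : {set {set T}}) : {set T} -> int :=
  fun e => if e \in Y then 1 else 0.

End Defs.

From mathcomp Require Import all_boot all_order all_algebra zify.
Set Implicit Arguments. Unset Strict Implicit.
Import Order.TTheory GRing.Theory Num.Theory.
Local Open Scope ring_scope.

(* For Y ⊆ E^*, which is disjoint from E, degrees in E ∪ Y are sums of degrees
   in E and in Y, and a red node has only blue neighbours through E^*.  Hence the
   IP constraint at a blue node says exactly that it is not under illusion in
   E ∪ Y, while at a red node it says that the new blue neighbours cover the
   deficit max(r - b, 0) exactly, which is stronger than needed.  An optimal
   MIAE solution nevertheless meets the stronger constraint: an added edge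
   between two red nodes, or an added edge at a red node with a surplus of blue
   neighbours, could be deleted without creating an illusion.  So optimal MIAE
   solutions give IP-feasible points of the same size, every IP-feasible point,
   a 0/1 vector on E^*, gives an MIAE-feasible edge set of the same size, and
   the two optima coincide.  Optima exist because the complete graph is
   MIAE-feasible when |B| > |R|. *)

Section Neighbourhoods.
Variable T : finType.
Implicit Types (E : {set {set T}}) (C e : {set T}) (a b u v : T).

Lemma eq_set2_common u a b : a != b -> ([set u; a] == [set a; b]) = (u == b).
Proof.
move=> ab; apply/eqP/eqP => [uaE|->]; last exact: setUC.
have : b \in [set u; a] by rewrite uaE !inE eqxx orbT.
by rewrite !inE [b == a]eq_sym (negbTE ab) orbF => /eqP ->.
Qed.

Lemma in_nbhd E u v : (u \in nbhd E v) = ([set u; v] \in E).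
Proof. by rewrite inE. Qed.

Lemma nbhdU E1 E2 v : nbhd (E1 :|: E2) v = nbhd E1 v :|: nbhd E2 v.
Proof. by apply/setP=> u; rewrite !inE. Qed.

Lemma nbhdS E1 E2 v : E1 \subset E2 -> nbhd E1 v \subset nbhd E2 v.
Proof. by move=> sE; apply/subsetP=> u; rewrite !inE => /(subsetP sE). Qed.

Lemma nbhd_setD1_end E a b : a != b -> nbhd (E :\ [set a; b]) a = nbhd E a :\ b.
Proof. by move=> ab; apply/setP=> u; rewrite !inE eq_set2_common. Qed.

Lemma nbhd_setD1_notin E e v : v \notin e -> nbhd (E :\ e) v = nbhd E v.
Proof.
move=> ve; apply/setP=> u; rewrite !inE andb_idl // => _.
by apply: contraNneq ve => <-; rewrite !inE eqxx orbT.
Qed.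

Lemma card_nbhdI_setU E1 E2 v C : [disjoint E1 & E2] ->
  #|nbhd (E1 :|: E2) v :&: C| = (#|nbhd E1 v :&: C| + #|nbhd E2 v :&: C|)%N.
Proof.
move=> E12; rewrite nbhdU setIUl -cardsUI.
suff -> : nbhd E1 v :&: C :&: (nbhd E2 v :&: C) = set0 by rewrite cards0 addn0.
apply/setP=> u; rewrite !inE andbACA andbb.
by case: (boolP ([set u; v] \in E1)) => //= /(disjointFr E12) ->.
Qed.

Lemma card_nbhdI_setD1_notin E a b C : a != b -> b \notin C ->
  #|nbhd (E :\ [set a; b]) a :&: C| = #|nbhd E a :&: C|.
Proof.
move=> ab bC; rewrite nbhd_setD1_end //; apply: eq_card => u.
by rewrite !inE; case: eqVneq => [->|] //=; rewrite (negbTE bC) andbF.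
Qed.

Lemma card_nbhdI_setD1_in E a b C : a != b -> b \in C -> b \in nbhd E a ->
  #|nbhd E a :&: C| = (#|nbhd (E :\ [set a; b]) a :&: C|).+1.
Proof.
by move=> ab bC bN; rewrite nbhd_setD1_end // (cardsD1 b) in_setI bN bC setIDAC.
Qed.

Lemma setUDKl_disjoint (S : finType) (A B : {set S}) :
  [disjoint A & B] -> (A :|: B) :\: A = B.
Proof. by move=> AB; rewrite setDUl setDv set0U; apply/setDidPl; rewrite disjoint_sym. Qed.

End Neighbourhoods.

Section Colouring.
Variables (T : finType) (f : T -> colour).
Implicit Types (E Y : {set {set T}}) (a b u v : T).

Lemma in_red v : (v \in red f) = (v \notin blue f).
Proof. by rewrite !inE; case: (f v). Qed.

Lemma bstar_red E v : v \in red f ->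
  bstar f E v = Num.max ((rdeg f E v)%:Z - (bdeg f E v)%:Z) 0.
Proof. by rewrite /bstar inE; case: (f v). Qed.

Lemma bstar_blue E v : v \in blue f -> bstar f E v = (bdeg f E v)%:Z - (rdeg f E v)%:Z.
Proof. by rewrite /bstar inE; case: (f v). Qed.

Lemma illusion_freeE E v : ~~ under_illusion f E v = (rdeg f E v <= bdeg f E v)%N.
Proof. by rewrite /under_illusion -leqNgt. Qed.

Lemma bdegU E1 E2 v : [disjoint E1 & E2] ->
  bdeg f (E1 :|: E2) v = (bdeg f E1 v + bdeg f E2 v)%N.
Proof. exact: card_nbhdI_setU. Qed.

Lemma rdegU E1 E2 v : [disjoint E1 & E2] ->
  rdeg f (E1 :|: E2) v = (rdeg f E1 v + rdeg f E2 v)%N.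
Proof. exact: card_nbhdI_setU. Qed.

Lemma illusion_free_delete_red E a b : a != b -> b \in red f ->
  ~~ under_illusion f E a -> ~~ under_illusion f (E :\ [set a; b]) a.
Proof.
move=> ab bR; rewrite !illusion_freeE /bdeg card_nbhdI_setD1_notin -?in_red //.
by apply: leq_trans; apply/subset_leq_card/setSI/nbhdS/subD1set.
Qed.

Lemma illusion_free_delete_blue E a b : a != b -> b \in blue f -> b \in nbhd E a ->
  (rdeg f E a < bdeg f E a)%N -> ~~ under_illusion f (E :\ [set a; b]) a.
Proof.
move=> ab bB bN; rewrite illusion_freeE /rdeg card_nbhdI_setD1_notin ?in_red ?bB //.
by rewrite /bdeg (card_nbhdI_setD1_in ab bB bN).
Qed.

Definition MIAE_feasibleb E E' : bool :=
  [&& [forall e in E', #|e| == 2], E \subset E' & [forall v, ~~ under_illusion f E' v]].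

Lemma MIAE_feasibleP E E' : reflect (MIAE_feasible f E E') (MIAE_feasibleb E E').
Proof.
apply: (iffP and3P) => [[/forall_inP E'2 sEE' /forallP noI]|[E'2 [sEE' noI]]].
  by split=> [e /E'2/eqP|].
by split=> //; [apply/forall_inP => e /E'2 -> | apply/forallP].
Qed.

Lemma MIAE_optimal_exists E E0 : MIAE_feasible f E E0 -> exists E', MIAE_optimal f E E'.
Proof.
move=> /MIAE_feasibleP F0.
case: (arg_minnP (P := MIAE_feasibleb E) (fun E' => #|E' :\: E|) F0).
move=> E' /MIAE_feasibleP F' E'_min.
by exists E'; split=> // E'' /MIAE_feasibleP /E'_min.
Qed.

Lemma complete_MIAE_feasible E : is_edge_set E -> (#|red f| < #|blue f|)%N ->
  MIAE_feasible f E [set e : {set T} | #|e| == 2].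
Proof.
move=> E2 RB; split=> [e|]; first by rewrite inE => /eqP.
split=> [|v]; first by apply/subsetP => e /E2; rewrite inE => ->.
have nbhdT C : #|nbhd [set e : {set T} | #|e| == 2] v :&: C| = #|C :\ v|.
  by apply: eq_card => u; rewrite !inE cards2; case: (u != v).
rewrite illusion_freeE /rdeg /bdeg !nbhdT.
move: RB; rewrite (cardsD1 v (red f)) (cardsD1 v (blue f)) in_red.
by case: (v \in blue f) => /=; lia.
Qed.

Lemma Estar_set2 E a b : a != b ->
  ([set a; b] \in Estar f E) = ([set a; b] \notin E) && ((a \in blue f) || (b \in blue f)).
Proof.
move=> ab; rewrite inE cards2 ab /=; congr (_ && _).
apply/set0Pn/orP => [[x /setIP[/set2P[]-> xB]]|[aB|bB]]; [left|right|exists a|exists b] => //.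
  by rewrite inE set21 aB.
by rewrite inE set22 bB.
Qed.

Lemma Estar_disjoint E Y : Y \subset Estar f E -> [disjoint E & Y].
Proof.
move=> sY; rewrite -setI_eq0; apply/eqP/setP => e; rewrite !inE.
by apply/negbTE/andP => -[eE /(subsetP sY)]; rewrite inE eE andbF.
Qed.

Lemma Estar_nbhd_red E v : v \in red f -> nbhd (Estar f E) v \subset blue f.
Proof.
move=> vR; apply/subsetP => u; rewrite inE => uvS.
have uv : u != v by move: uvS; rewrite inE cards2; case: (u != v).
rewrite in_red in vR.
by move: uvS; rewrite Estar_set2 // (negbTE vR) orbF => /andP[].
Qed.

Lemma rdeg_red_Estar E Y v : Y \subset Estar f E -> v \in red f -> rdeg f Y v = 0%N.
Proof.
move=> sY vR; apply/eqP; rewrite cards_eq0 -subset0; apply/subsetP => u /setIP[uY uR].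
have uB := subsetP (Estar_nbhd_red E vR) u (subsetP (nbhdS v sY) u uY).
by rewrite in_red uB in uR.
Qed.

Lemma MIAE_feasible_delete E E' e : MIAE_feasible f E E' -> e \notin E ->
  {in e, forall v, ~~ under_illusion f (E' :\ e) v} -> MIAE_feasible f E (E' :\ e).
Proof.
move=> [E'2 [sEE' noI]] eE eI; split=> [x /setD1P[_ /E'2] //|].
split=> [|v].
  apply/subsetP=> x xE; rewrite !inE (subsetP sEE') // andbT.
  by apply: contraNneq eE => <-.
have [/eI //|ve] := boolP (v \in e).
by rewrite /under_illusion /bdeg /rdeg nbhd_setD1_notin //; apply: noI.
Qed.

Lemma MIAE_optimal_delete E E' e : MIAE_optimal f E E' -> e \in E' :\: E ->
  ~ {in e, forall v, ~~ under_illusion f (E' :\ e) v}.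
Proof.
move=> [F' E'_min] eD eI; have /setDP[eE' eE] := eD.
have := E'_min _ (MIAE_feasible_delete F' eE eI).
by rewrite (cardsD1 e (E' :\: E)) eD setDDl setUC -setDDl add1n ltnn.
Qed.

Lemma MIAE_optimal_sub_Estar E E' : MIAE_optimal f E E' -> E' :\: E \subset Estar f E.
Proof.
move=> E'_opt; apply/subsetP => e eD; have [[E'2 [_ noI]] _] := E'_opt.
have /setDP[eE' eE] := eD.
have /cards2P[a [b [ab eab]]] : #|e| == 2 by rewrite E'2.
subst e; rewrite Estar_set2 // eE /=; apply/negPn/negP => /norP[aR bR].
rewrite -!in_red in aR bR.
apply: (MIAE_optimal_delete E'_opt eD) => v /set2P[]->.
  exact: illusion_free_delete_red (noI a).
by rewrite setUC; apply: illusion_free_delete_red (noI b); rewrite 1?eq_sym.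
Qed.

Lemma MIAE_optimal_red_tight E E' v : MIAE_optimal f E E' -> v \in red f ->
  (0 < bdeg f (E' :\: E) v)%N -> (bdeg f E' v <= rdeg f E' v)%N.
Proof.
move=> E'_opt vR /card_gt0P[u /setIP[uvD uB]]; rewrite leqNgt; apply/negP => lt.
have [[_ [_ noI]] _] := E'_opt.
have uv : u != v by apply: contraTneq uB => ->; rewrite -in_red.
rewrite inE in uvD; have /setDP[uvE' _] := uvD.
apply: (MIAE_optimal_delete E'_opt uvD) => w /set2P[]->.
  exact: illusion_free_delete_red (noI u).
rewrite [[set u; v]]setUC; apply: illusion_free_delete_blue; rewrite 1?eq_sym //.
by rewrite inE.
Qed.

Lemma sum_indicator_nbhd E Y v C : Y \subset Estar f E ->
  \sum_(u in nbhd (Estar f E) v :&: C) indicator Y [set u; v] = #|nbhd Y v :&: C|%:Z.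
Proof.
move=> sY; rewrite /indicator -big_mkcondr /= sumr_const natz; congr Posz.
apply: eq_card => u; rewrite unfold_in /= !in_setI !in_nbhd andbAC.
by case: ([set u; v] \in Y) / boolP => [/(subsetP sY) ->|]; rewrite ?andbF.
Qed.

Lemma IP_obj_indicator E Y : Y \subset Estar f E -> IP_obj f E (indicator Y) = - #|Y|%:Z.
Proof.
move=> sY; rewrite /IP_obj /indicator -big_mkcondr /= sumr_const natz.
congr (- Posz _); apply: eq_card => e; rewrite unfold_in /= andbC.
by case: (e \in Y) / boolP => // /(subsetP sY) ->.
Qed.

Lemma IP_feasible_indicator_MIAE E Y : is_edge_set E -> Y \subset Estar f E ->
  IP_feasible f E (indicator Y) -> MIAE_feasible f E (E :|: Y).
Proof.
move=> E2 sY [_ [redC blueC]]; have dY := Estar_disjoint sY.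
split=> [e /setUP[/E2 //|/(subsetP sY)]|]; first by rewrite inE => /and3P[/eqP].
split=> [|v]; first exact: subsetUl.
rewrite illusion_freeE rdegU // bdegU //.
have [vB|] := boolP (v \in blue f).
  move: (blueC v vB); rewrite !sum_indicator_nbhd // bstar_blue //.
  rewrite -/(bdeg f Y v) -/(rdeg f Y v); lia.
rewrite -in_red => vR; move: (redC v vR).
rewrite sum_indicator_nbhd // bstar_red // -/(bdeg f Y v) (rdeg_red_Estar sY vR); lia.
Qed.

Lemma MIAE_optimal_IP_feasible E E' : MIAE_optimal f E E' ->
  IP_feasible f E (indicator (E' :\: E)).
Proof.
move=> E'_opt; have sY := MIAE_optimal_sub_Estar E'_opt.
have [[_ [sEE' noI]] _] := E'_opt; set Y := E' :\: E.
have dY := Estar_disjoint sY.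
have E'E : E' = E :|: Y by rewrite /Y -{1}(setID E' E) (setIidPr sEE').
have degs w : (rdeg f E w + rdeg f Y w <= bdeg f E w + bdeg f Y w)%N.
  by rewrite -rdegU // -bdegU // -E'E -illusion_freeE; apply: noI.
split=> [e _|]; first by rewrite /indicator; case: ifP; [right|left].
split=> v.
- move=> vR; rewrite sum_indicator_nbhd // bstar_red // -/(bdeg f Y v).
  have := MIAE_optimal_red_tight E'_opt vR; rewrite -/Y E'E rdegU // bdegU //.
  have := degs v; rewrite (rdeg_red_Estar sY vR); lia.
- move=> vB; rewrite !sum_indicator_nbhd // bstar_blue // -/(bdeg f Y v) -/(rdeg f Y v).
  have := degs v; lia.
Qed.

Definition IP_support E (y : {set T} -> int) : {set {set T}} :=
  [set e in Estar f E | y e == 1].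

Lemma IP_support_sub E y : IP_support E y \subset Estar f E.
Proof. by apply/subsetP => e; rewrite inE => /andP[]. Qed.

Lemma IP_feasible_eq_in E (y z : {set T} -> int) : {in Estar f E, y =1 z} ->
  IP_feasible f E y -> IP_feasible f E z.
Proof.
move=> yz [y01 [redC blueC]].
have sum_eq v C : \sum_(u in nbhd (Estar f E) v :&: C) y [set u; v] =
                  \sum_(u in nbhd (Estar f E) v :&: C) z [set u; v].
  by apply: eq_bigr => u /setIP[]; rewrite in_nbhd => /yz.
split=> [e eS|]; first by rewrite -yz //; apply: y01.
by split=> v vC; rewrite -!sum_eq; [apply: redC | apply: blueC].
Qed.

Lemma IP_obj_eq_in E (y z : {set T} -> int) : {in Estar f E, y =1 z} ->
  IP_obj f E y = IP_obj f E z.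
Proof. by move=> yz; congr (- _); apply: eq_bigr => e /yz. Qed.

Lemma IP_feasible_indicator_support E y : IP_feasible f E y ->
  {in Estar f E, y =1 indicator (IP_support E y)}.
Proof. by move=> [y01 _] e eS; rewrite /indicator inE eS /=; case: (y01 e eS) => ->. Qed.

Lemma IP_obj_le_MIAE_optimal E E' y : is_edge_set E -> MIAE_optimal f E E' ->
  IP_feasible f E y -> IP_obj f E y <= - #|E' :\: E|%:Z.
Proof.
move=> E2 [_ E'_min] Fy; have yS := IP_feasible_indicator_support Fy.
have sS := IP_support_sub E y.
have FS := IP_feasible_indicator_MIAE E2 sS (IP_feasible_eq_in yS Fy).
rewrite (IP_obj_eq_in yS) IP_obj_indicator // lerN2 lez_nat.
by have := E'_min _ FS; rewrite setUDKl_disjoint // Estar_disjoint.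
Qed.

End Colouring.

Section Optimality.
Variables (T : finType) (f : T -> colour) (E Eo : {set {set T}}).
Hypotheses (E2 : is_edge_set E) (Eo_opt : MIAE_optimal f E Eo).

Lemma IP_optimalE y :
  IP_optimal f E y <-> IP_feasible f E y /\ IP_obj f E y = - #|Eo :\: E|%:Z.
Proof.
have Fo := MIAE_optimal_IP_feasible Eo_opt.
have objo := IP_obj_indicator (MIAE_optimal_sub_Estar Eo_opt).
split=> [[Fy y_max]|[Fy y_obj]].
  by split=> //; apply/eqP; rewrite eq_le IP_obj_le_MIAE_optimal //= -objo y_max.
by split=> // y' Fy'; rewrite y_obj; exact: IP_obj_le_MIAE_optimal.
Qed.

Lemma MIAE_optimalE E' :
  MIAE_optimal f E E' <-> MIAE_feasible f E E' /\ #|E' :\: E| = #|Eo :\: E|.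
Proof.
have [Fo Eo_min] := Eo_opt.
split=> [[F' E'_min]|[F' cardE']].
  by split=> //; apply/eqP; rewrite eqn_leq E'_min ?Eo_min.
by split=> // E'' /Eo_min; rewrite cardE'.
Qed.

Lemma IP_optimal_indicatorP (Y : {set {set T}}) : Y \subset Estar f E ->
  IP_optimal f E (indicator Y) <-> MIAE_optimal f E (E :|: Y).
Proof.
move=> sY; have YD := setUDKl_disjoint (Estar_disjoint sY).
split=> [/IP_optimalE[FY]|/[dup] EY_opt /MIAE_optimalE[FY]].
  rewrite IP_obj_indicator // => /oppr_inj[cardY]; apply/MIAE_optimalE.
  by rewrite YD; split=> //; exact: IP_feasible_indicator_MIAE.
rewrite YD => cardY; apply/IP_optimalE; rewrite IP_obj_indicator // cardY.
by split=> //; rewrite -YD; exact: MIAE_optimal_IP_feasible.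
Qed.

End Optimality.

Theorem mainTheorem6 (T : finType) (E : {set {set T}}) (f : T -> colour) :
  is_edge_set E ->
  (#|red f| < #|blue f|)%N ->
  (forall Y : {set {set T}}, Y \subset Estar f E ->
     (IP_optimal f E (indicator Y) <-> MIAE_optimal f E (E :|: Y))) /\
  (forall E', MIAE_optimal f E E' -> E' :\: E \subset Estar f E) /\
  ((exists y, IP_optimal f E y) /\ (exists E', MIAE_optimal f E E') /\
   forall y E', IP_optimal f E y -> MIAE_optimal f E E' ->
     IP_obj f E y = - (#|E' :\: E|%:Z)).
Proof.
move=> E2 RB.
have [Eo Eo_opt] := MIAE_optimal_exists (complete_MIAE_feasible E2 RB).
split; first exact: IP_optimal_indicatorP E2 Eo_opt.
split; first exact: MIAE_optimal_sub_Estar.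
split.
  exists (indicator (Eo :\: E)); apply/(IP_optimalE E2 Eo_opt).
  split; first exact: MIAE_optimal_IP_feasible.
  exact: IP_obj_indicator (MIAE_optimal_sub_Estar Eo_opt).
split; first by exists Eo.
by move=> y E' y_opt E'_opt; case/(IP_optimalE E2 E'_opt): y_opt.
Qed.
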